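(* Let $\mathcal{P}$ be a finite poset with $p$ elements such that $\mathcal{C}(\mathcal{P})$ is simplicial. Then $\mathbf{M}_{\mathcal{P}}^{-1}$ maps $\mathcal{C}(\mathcal{P})$ bijectively onto $\mathbb{R}^p_+$.
   Context: The order cone $\mathcal{C}(\mathcal{P})\subset\mathbb{R}^{\mathcal{P}}$ is the set of functions $\mathbf{f}$ on $\mathcal{P}$ with $f_x\ge0$ for all $x$ and $f_x\le f_y$ whenever $x\preceq y$. A cone in $\mathbb{R}^p$ is simplicial if it is the conical hull of $p$ linearly independent vectors. With standard basis $\{\mathbf{e}_x\}$ of $\mathbb{R}^{\mathcal{P}}\cong\mathbb{R}^p$, the Möbius transform $\mathbf{M}_{\mathcal{P}}$ is the linear map with $\mathbf{M}_{\mathcal{P}}(\mathbf{e}_x)=\sum_{y:\,x\preceq y}\mathbf{e}_y$; $\mathbb{R}^p_+$ denotes the vectors with nonnegative entries. *)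

From HB Require Import structures.
From mathcomp Require Import all_boot all_order all_algebra.
Set Implicit Arguments. Unset Strict Implicit. Unset Printing Implicit Defensive.
Import Order.TTheory GRing.Theory Num.Theory.
Local Open Scope ring_scope.

(* A function f on the finite poset T is encoded as a row vector
   v : 'rV[R]_#|T|, with f_x = v 0 (enum_rank x), i.e. the coordinate of
   index i : 'I_#|T| corresponds to the element enum_val i of T. The
   standard basis vector e_x is the row vector delta_mx 0 (enum_rank x). *)

Definition order_cone (d : Order.disp_t) (T : finPOrderType d) (R : realFieldType)
  (v : 'rV[R]_#|T|) : Prop :=
  (forall i : 'I_#|T|, 0 <= v 0 i) /\
  (forall i j : 'I_#|T|, (enum_val i <= enum_val j)%O -> v 0 i <= v 0 j).

Definition simplicial (p : nat) (R : realFieldType) (C : 'rV[R]_p -> Prop) : Prop :=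
  exists B : 'M[R]_p, row_free B /\
    forall v, C v <-> exists c : 'rV[R]_p, (forall i, 0 <= c 0 i) /\ v = c *m B.

(* Moebius transform as a matrix acting on row vectors v |-> v *m M:
   e_x *m M = row x of M = sum_{y : x <= y} e_y. *)
Definition moebius (d : Order.disp_t) (T : finPOrderType d) (R : realFieldType)
  : 'M[R]_#|T| :=
  \matrix_(i, j) ((enum_val i <= enum_val j)%O)%:R.

Definition nonneg_orthant (p : nat) (R : realFieldType) (w : 'rV[R]_p) : Prop :=
  forall i, 0 <= w 0 i.

(* Every principal up-set indicator [row i M] spans an extreme ray of the
   order cone.  If the cone is generated by p vectors, each extreme ray is
   spanned by one of the generators, and distinct principal up-sets give
   distinct generators; by counting, the generators are exactly positive
   multiples of the rows of M.  Hence the order cone is the conic hull of the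
   rows of M, which M^-1 maps onto the nonnegative orthant. *)
From HB Require Import structures.
From mathcomp Require Import all_boot all_order all_algebra.
Set Implicit Arguments. Unset Strict Implicit. Unset Printing Implicit Defensive.
Import Order.TTheory GRing.Theory Num.Theory.
Local Open Scope ring_scope.

Section ConicHull.
Variable R : realFieldType.

Definition conic_hull m n (B : 'M[R]_(m, n)) (v : 'rV[R]_n) : Prop :=
  exists2 c : 'rV[R]_m, nonneg_orthant c & v = c *m B.

Lemma simplicial_conic_hull p (C : 'rV[R]_p -> Prop) :
  simplicial C -> exists B : 'M[R]_p, forall v, C v <-> conic_hull B v.
Proof.
move=> [B [_ CB]]; exists B => v; split=> [/CB[c [c_ge0 ->]]|[c c_ge0 ->]].
  by exists c.
by apply/CB; exists c.
Qed.

Lemma conic_hull_row m n (B : 'M[R]_(m, n)) k : conic_hull B (row k B).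
Proof. by exists (delta_mx 0 k); rewrite ?rowE // => i; rewrite mxE ler0n. Qed.

Lemma conic_hullZ m n (B : 'M[R]_(m, n)) a v :
  0 <= a -> conic_hull B v -> conic_hull B (a *: v).
Proof.
move=> a_ge0 [c c_ge0 ->]; exists (a *: c); last by rewrite scalemxAl.
by move=> i; rewrite mxE mulr_ge0.
Qed.

Lemma conic_hull_trans m1 m2 n (A : 'M[R]_(m1, n)) (B : 'M[R]_(m2, n)) v :
  (forall k, conic_hull A (row k B)) -> conic_hull B v -> conic_hull A v.
Proof.
move=> BA [c c_ge0 ->].
have /fin_all_exists2[w w_ge0 rowBE] := BA.
exists (\sum_k c 0 k *: w k).
  move=> i; rewrite summxE; apply: sumr_ge0 => k _.
  by rewrite mxE mulr_ge0 ?c_ge0 ?w_ge0.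
rewrite mulmx_sum_row mulmx_suml; apply: eq_bigr => k _.
by rewrite rowBE scalemxAl.
Qed.

Lemma extreme_conic_hull_row m n (B : 'M[R]_(m, n)) x :
  conic_hull B x -> x != 0 ->
  (forall f, conic_hull B f -> conic_hull B (x - f) -> exists a, f = a *: x) ->
  exists k a, a != 0 /\ row k B = a *: x.
Proof.
move=> [c c_ge0 xE] x_neq0 x_extreme.
have [k ck_neq0|all0] := pickP (fun k => c 0 k *: row k B != 0); last first.
  case/eqP: x_neq0; rewrite xE mulmx_sum_row big1 // => k _.
  exact/eqP/negbFE/all0.
have [a ckE] : exists a, c 0 k *: row k B = a *: x.
  apply: x_extreme; first exact/conic_hullZ/conic_hull_row.
  exists (c - c 0 k *: delta_mx 0 k).
    move=> j; rewrite !mxE; case: (eqVneq j k) => [->|_].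
      by rewrite eqxx mulr1 subrr.
    by rewrite andbF mulr0 subr0.
  by rewrite xE mulmxBl -scalemxAl -rowE.
have c_neq0 : c 0 k != 0 by apply: contraNneq ck_neq0 => ->; rewrite scale0r.
exists k, ((c 0 k)^-1 * a); split.
  rewrite mulf_neq0 ?invr_eq0 //.
  by apply: contraNneq ck_neq0 => a0; rewrite ckE a0 scale0r.
by rewrite -scalerA -ckE scalerA mulVf ?scale1r.
Qed.

End ConicHull.

Section Moebius.
Variables (d : Order.disp_t) (T : finPOrderType d) (R : realFieldType).
Local Notation M := (moebius T R).

Lemma moebiusE i j : M i j = ((enum_val i <= enum_val j)%O)%:R.
Proof. by rewrite mxE. Qed.

(* Solving [u *m M = 0] for [u 0 j] by induction on the number of elements
   strictly below [enum_val j]. *)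
Lemma moebius_unit : M \in unitmx.
Proof.
rewrite -row_free_unit; apply: inj_row_free => u uM0.
pose below (j : 'I_#|T|) := [set i : 'I_#|T| | (enum_val i < enum_val j)%O].
have step j : (forall i, i \in below j -> u 0 i = 0) -> u 0 j = 0.
  move=> below0; move/matrixP: uM0 => /(_ 0 j); rewrite !mxE.
  rewrite (bigD1 j) //= moebiusE lexx mulr1 big1 ?addr0 // => i i_neq_j.
  rewrite moebiusE; case le_ij: (enum_val i <= enum_val j)%O; last by rewrite mulr0.
  rewrite below0 ?mul0r // inE lt_neqAle le_ij andbT.
  by apply: contra i_neq_j => /eqP/enum_val_inj ->.
suff u0 n j : (#|below j| <= n)%N -> u 0 j = 0.
  by apply/rowP => j; rewrite mxE (u0 _ j (leqnn _)).
elim: n j => [|n IHn] j below_n; apply: step => i.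
  by move: below_n; rewrite leqn0 => /eqP/cards0_eq ->; rewrite inE.
move=> i_below; apply: IHn; rewrite -ltnS; apply: leq_trans below_n.
apply: proper_card; apply/properP; split; last by exists i => //; rewrite inE ltxx.
by apply/subsetP => k; rewrite !inE => /lt_trans; apply; rewrite inE in i_below.
Qed.

Lemma order_cone_moebius w : nonneg_orthant w -> order_cone (w *m M).
Proof.
move=> w_ge0; split=> [j|j k le_jk]; rewrite !mxE.
  by apply: sumr_ge0 => i _; rewrite moebiusE mulr_ge0 ?ler0n.
apply: ler_sum => i _; rewrite !moebiusE ler_wpM2l //.
case le_ij: (enum_val i <= enum_val j)%O; first by rewrite (le_trans le_ij le_jk).
exact: ler0n.
Qed.

Lemma order_cone_row_moebius i : order_cone (row i M).
Proof.
rewrite rowE; apply: order_cone_moebius => j.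
by rewrite mxE ler0n.
Qed.

Lemma moebius_row_extreme i f :
  order_cone f -> order_cone (row i M - f) -> f = f 0 i *: row i M.
Proof.
move=> [f_ge0 f_mono] [g_ge0 g_mono]; apply/rowP => j; rewrite !mxE.
case le_ij: (enum_val i <= enum_val j)%O; rewrite /= ?mulr1n ?mulr0n.
  rewrite mulr1; apply/eqP; rewrite eq_le (f_mono _ _ le_ij) andbT.
  by have := g_mono _ _ le_ij; rewrite !mxE lexx le_ij /= mulr1n lerD2l lerN2.
rewrite mulr0; apply/eqP; rewrite eq_le f_ge0 andbT.
by have := g_ge0 j; rewrite !mxE le_ij /= mulr0n sub0r oppr_ge0.
Qed.

Lemma moebius_scaled_row_le i j a b :
  0 < b -> a *: row i M = b *: row j M -> (enum_val i <= enum_val j)%O.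
Proof.
move=> b_gt0 /rowP/(_ j); rewrite !mxE lexx mulr1.
case: (enum_val i <= enum_val j)%O => //; rewrite mulr0 => b0.
by rewrite -b0 ltxx in b_gt0.
Qed.

Lemma moebius_scaled_row_inj i j a b :
  0 < a -> 0 < b -> a *: row i M = b *: row j M -> i = j.
Proof.
move=> a_gt0 b_gt0 rowsE; apply: enum_val_inj; apply: le_anti.
by rewrite (moebius_scaled_row_le b_gt0 rowsE)
           (moebius_scaled_row_le a_gt0 (esym rowsE)).
Qed.

End Moebius.

Section SimplicialOrderCone.
Variables (d : Order.disp_t) (T : finPOrderType d) (R : realFieldType).
Variable B : 'M[R]_#|T|.
Hypothesis order_coneE : forall v, order_cone v <-> conic_hull B v.
Local Notation M := (moebius T R).

Lemma moebius_row_generator i :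
  exists k, 0 < B k i /\ row k B = B k i *: row i M.
Proof.
have [k [a [a_neq0 rowBE]]] : exists k a, a != 0 /\ row k B = a *: row i M.
  apply: extreme_conic_hull_row.
  - exact/order_coneE/order_cone_row_moebius.
  - by apply/eqP => /rowP/(_ i)/eqP; rewrite !mxE lexx oner_eq0.
  - move=> f /order_coneE f_cone /order_coneE g_cone.
    by exists (f 0 i); apply: moebius_row_extreme.
have Bki : B k i = a by move/rowP: rowBE => /(_ i); rewrite !mxE lexx mulr1.
exists k; rewrite Bki; split=> //; rewrite lt_def a_neq0 -Bki.
by have [/(_ i)] := (order_coneE _).2 (conic_hull_row B k); rewrite mxE.
Qed.

Lemma order_cone_conic_hull_moebius v : order_cone v -> conic_hull M v.
Proof.
have [sigma sigmaP] := fin_all_exists moebius_row_generator.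
have sigma_inj : injective sigma.
  move=> i j eq_sigma.
  have [[a_gt0 rowiE] [b_gt0 rowjE]] := (sigmaP i, sigmaP j).
  apply: (moebius_scaled_row_inj a_gt0 b_gt0).
  by rewrite -rowiE -rowjE eq_sigma.
have [tau sigmaK tauK] := injF_bij sigma_inj.
move=> /order_coneE; apply: conic_hull_trans => k.
rewrite -[k]tauK (sigmaP _).2; apply: conic_hullZ; last exact: conic_hull_row.
exact/ltW/(sigmaP _).1.
Qed.

End SimplicialOrderCone.

Theorem lemma4 (d : Order.disp_t) (T : finPOrderType d) (R : realFieldType) :
  simplicial (order_cone (T := T) (R := R)) ->
  let M := moebius T R in
  M \in unitmx /\
  (forall v : 'rV[R]_#|T|, order_cone v -> nonneg_orthant (v *m invmx M)) /\
  (forall v1 v2 : 'rV[R]_#|T|, order_cone v1 -> order_cone v2 ->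
      v1 *m invmx M = v2 *m invmx M -> v1 = v2) /\
  (forall w : 'rV[R]_#|T|, nonneg_orthant w ->
      exists2 v, order_cone v & v *m invmx M = w).
Proof.
move=> /simplicial_conic_hull[B order_coneE] M.
have M_unit : M \in unitmx := moebius_unit T R.
split=> //; split.
  move=> v /(order_cone_conic_hull_moebius order_coneE)[w w_ge0 ->].
  by rewrite mulmxK.
split; first by move=> v1 v2 _ _; apply: (can_inj (mulmxKV M_unit)).
move=> w w_ge0; exists (w *m M); first exact: order_cone_moebius.
exact: mulmxK.
Qed.
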